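(* $\mathrm{WL}_1\not\preceq\omega^{(3)}$: there exist graphs $G$ and $H$ with $\omega^{(3)}(G)=\omega^{(3)}(H)$ but $\mathrm{WL}_1(G)\ne\mathrm{WL}_1(H)$.
   Context: Graphs are finite, simple and undirected; an $N$-vertex graph has $V(G)=\{1,\dots,N\}$. Let $w_k(x,y)$ be the number of walks of length $k$ from $x$ to $y$, $w_*(x,y)=(w_0(x,y),\dots,w_{N-1}(x,y))$. Define $\omega_0(x)=w_*(x,x)$, $\omega_{r+1}(x)=\big(\omega_r(x),\{\!\{(w_*(x,y),\omega_r(y))\}\!\}_{y\in V(G)}\big)$, where $\{\!\{\cdot\}\!\}$ denotes a multiset, and $\omega^{(r)}(G)=\{\!\{\omega_r(x)\}\!\}_{x\in V(G)}$. Color refinement: $C^0(x)$ uniform, $C^{r+1}(x)=\big(C^r(x),\{\!\{C^r(y)\}\!\}_{y\in N(x)}\big)$; $\mathrm{WL}_1(G)=\{\!\{C^N(x)\}\!\}_{x\in V(G)}$. *)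

From HB Require Import structures.
From mathcomp Require Import all_boot.
From mathcomp.finmap Require Import finmap multiset.

Set Implicit Arguments.
Unset Strict Implicit.
Unset Printing Implicit Defensive.
Local Open Scope mset_scope.
Local Open Scope nat_scope.

(* A finite simple undirected graph on N vertices {1..N} is represented by its
   adjacency relation [e : rel 'I_N], required (in the statement) to be
   symmetric and irreflexive. *)

Fixpoint walks (N : nat) (e : rel 'I_N) (k : nat) (x y : 'I_N) : nat :=
  match k with
  | 0 => (x == y : nat)
  | k'.+1 => \sum_(z : 'I_N | e x z) walks e k' z y
  end.

Definition wvec (N : nat) (e : rel 'I_N) (x y : 'I_N) : seq nat :=
  [seq walks e k x y | k <- iota 0 N].

Fixpoint omega_type (r : nat) : choiceType :=
  match r with
  | 0 => (seq nat : choiceType)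
  | r'.+1 => ((omega_type r' * {mset (seq nat * omega_type r')%type})%type : choiceType)
  end.

Fixpoint omega (N : nat) (e : rel 'I_N) (r : nat) (x : 'I_N) : omega_type r :=
  match r return omega_type r with
  | 0 => wvec e x x
  | r'.+1 => (omega e r' x,
              seq_mset [seq (wvec e x y, omega e r' y) | y <- enum 'I_N])
  end.

Definition omega_graph (N : nat) (e : rel 'I_N) (r : nat) : (multiset (omega_type r)) :=
  seq_mset [seq omega e r x | x <- enum 'I_N].

Fixpoint color_type (r : nat) : choiceType :=
  match r with
  | 0 => (unit : choiceType)
  | r'.+1 => ((color_type r' * {mset color_type r'})%type : choiceType)
  end.

Fixpoint color (N : nat) (e : rel 'I_N) (r : nat) (x : 'I_N) : color_type r :=
  match r return color_type r with
  | 0 => tt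
  | r'.+1 => (color e r' x, seq_mset [seq color e r' y | y <- enum 'I_N & e x y])
  end.

Definition WL1 (N : nat) (e : rel 'I_N) : (multiset (color_type N)) :=
  seq_mset [seq color e N x | x <- enum 'I_N].

From HB Require Import structures.
From mathcomp Require Import all_boot.
From mathcomp.finmap Require Import finmap multiset.
From Stdlib Require Import BinNat.

(* G and H are chains of eight four-vertex gadgets (vertices 4i, ..., 4i+3)
   with degree-2 marker vertices 32, ..., 41; they differ only in which pair
   of the last gadget carries marker 41.  Both halves are certified by
   computation.

   omega: call a pair of vertex labellings of G and H a refinement of omega_r
   when equal labels force equal omega_r.  If l refines omega_r and equal
   labels m force equal labels l and equal multisets {{(w_*(x,u), l(u))}}_u,
   then m refines omega_(r+1).  Starting from the diagonal walk vectors, this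
   yields labellings refining omega_3 with the same multiset of labels on G
   and H, hence omega^(3)(G) = omega^(3)(H).

   WL_1: any function of colours induces an invariant of the WL_1 multiset;
   a polynomial hash modulo a prime, summed over the vertices, already
   differs on G and H. *)

Set Implicit Arguments.
Unset Strict Implicit.
Unset Printing Implicit Defensive.

Lemma nat_of_addN (a b : N) : N.add a b = a + b :> nat.
Proof. by case: a => [|p]; case: b => [|q] //=; rewrite ?addn0 // nat_of_add_pos. Qed.

Definition sumN (s : seq N) : N := foldr N.add N0 s.

Lemma nat_of_sumN (s : seq N) : sumN s = sumn (map nat_of_bin s) :> nat.
Proof. by elim: s => //= a s IHs; rewrite nat_of_addN IHs. Qed.

Lemma perm_sumN (s t : seq N) : perm_eq s t -> sumN s = sumN t.
Proof.
move=> pst; apply: (can_inj nat_of_binK); rewrite !nat_of_sumN.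
exact/perm_sumn/perm_map.
Qed.

Fixpoint addrow (u v : seq N) : seq N :=
  match u, v with
  | a :: u', b :: v' => N.add a b :: addrow u' v'
  | [::], _ => v
  | _, [::] => u
  end.

Lemma nth_addrow (u v : seq N) i :
  nth N0 (addrow u v) i = N.add (nth N0 u i) (nth N0 v i).
Proof.
elim: u v i => [|a u IHu] [|b v] [|i] //=; rewrite ?nth_nil //.
- by case: a.
- by case: (nth N0 u i).
Qed.

Lemma nth_sum_rows (rows : seq (seq N)) i :
  nth N0 (foldr addrow [::] rows) i = sumN [seq nth N0 r i | r <- rows].
Proof. by elim: rows => [|r rows IHrows] /=; rewrite ?nth_nil // nth_addrow IHrows. Qed.

Lemma traject_iota (T : Type) (f : T -> T) (x : T) n :
  traject f x n = [seq iter i f x | i <- iota 0 n].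
Proof.
apply: (@eq_from_nth _ x); rewrite ?size_traject ?size_map ?size_iota // => i lt_i_n.
by rewrite nth_traject // (nth_map 0) ?size_iota // nth_iota.
Qed.

Lemma perm_eq_relabel (V A C X : eqType) (s1 s2 : seq V) (a1 a2 : V -> A)
    (c1 c2 : V -> C) (o1 o2 : V -> X) :
  (forall u v, c1 u = c2 v -> o1 u = o2 v) ->
  perm_eq [seq (a1 u, c1 u) | u <- s1] [seq (a2 v, c2 v) | v <- s2] ->
  perm_eq [seq (a1 u, o1 u) | u <- s1] [seq (a2 v, o2 v) | v <- s2].
Proof.
move=> c_o pc; case: s2 pc => [|v0 s2'] pc.
  by have := perm_size pc; case: s1 {pc}.
set s2 := v0 :: s2' in pc *.
pose f k := o2 (nth v0 s2 (find (fun v => c2 v == k) s2)).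
have o1E u : u \in s1 -> o1 u = f (c1 u).
  move=> s1u; have : (a1 u, c1 u) \in [seq (a2 v, c2 v) | v <- s2].
    by rewrite -(perm_mem pc) map_f.
  case/mapP=> v s2v [_ cuv].
  have has_cu : has (fun w => c2 w == c1 u) s2 by apply/hasP; exists v; rewrite ?cuv.
  by apply: c_o; rewrite (eqP (nth_find v0 has_cu)).
have o2E v : v \in s2 -> o2 v = f (c2 v).
  move=> s2v; have : (a2 v, c2 v) \in [seq (a1 u, c1 u) | u <- s1].
    by rewrite (perm_mem pc) map_f.
  by case/mapP=> u s1u [_ cvu]; rewrite -(c_o u v (esym cvu)) o1E // cvu.
have -> : [seq (a1 u, o1 u) | u <- s1] =
          [seq (p.1, f p.2) | p <- [seq (a1 u, c1 u) | u <- s1]].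
  by rewrite -map_comp; apply/eq_in_map => u /o1E ->.
have -> : [seq (a2 v, o2 v) | v <- s2] =
          [seq (p.1, f p.2) | p <- [seq (a2 v, c2 v) | v <- s2]].
  by rewrite -map_comp; apply/eq_in_map => v /o2E ->.
exact: perm_map.
Qed.

Section RefineOmega.
Variables (n : nat) (e1 e2 : rel 'I_n).

Definition refines_omega r (l1 l2 : 'I_n -> nat) :=
  forall x y, l1 x = l2 y -> omega e1 r x = omega e2 r y.

Lemma refines_omegaS r (l1 l2 m1 m2 : 'I_n -> nat) :
  refines_omega r l1 l2 ->
  (forall x y, m1 x = m2 y -> l1 x = l2 y /\
     perm_eq [seq (wvec e1 x u, l1 u) | u <- enum 'I_n]
             [seq (wvec e2 y u, l2 u) | u <- enum 'I_n]) ->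
  refines_omega r.+1 m1 m2.
Proof.
move=> l_omega m_l x y /m_l[lxy pxy] /=.
rewrite (l_omega x y lxy); congr (_, _); apply/eq_seq_msetP.
exact: perm_eq_relabel l_omega pxy.
Qed.

Lemma refines_omega_graph r (l1 l2 : 'I_n -> nat) :
  refines_omega r l1 l2 ->
  perm_eq [seq l1 x | x <- enum 'I_n] [seq l2 x | x <- enum 'I_n] ->
  omega_graph e1 r = omega_graph e2 r.
Proof.
move=> l_omega pl; apply/eq_seq_msetP.
have := perm_map (pair tt) pl; rewrite -!map_comp => /(perm_eq_relabel l_omega).
by move=> /(perm_map snd); rewrite -!map_comp.
Qed.

End RefineOmega.

Definition graph_of n (adj : seq (seq nat)) : rel 'I_n :=
  fun x y => nat_of_ord y \in nth [::] adj x.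

Lemma nth_map_iota (T : Type) n (x0 : T) (f : nat -> T) (x : 'I_n) :
  nth x0 [seq f y | y <- iota 0 n] x = f x.
Proof. by rewrite (nth_map 0) ?size_iota ?ltn_ord // nth_iota ?ltn_ord. Qed.

(* All checks range over iota 0 n: enum 'I_n does not reduce under vm_compute. *)
Definition all_pairs n (P : nat -> nat -> bool) : bool :=
  all (fun x => all (P x) (iota 0 n)) (iota 0 n).

Lemma all_pairsP n (P : nat -> nat -> bool) :
  all_pairs n P -> forall x y : 'I_n, P x y.
Proof.
have mem_iota_ord (x : 'I_n) : nat_of_ord x \in iota 0 n by rewrite mem_iota ltn_ord.
by move=> /allP all_x x y; have /allP := all_x x (mem_iota_ord x); apply.
Qed.

Section WalkTable.
Variables (n : nat) (adj : seq (seq nat)).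
Local Notation e := (@graph_of n adj).

Definition nbrs (x : nat) : seq nat := [seq z <- iota 0 n | z \in nth [::] adj x].

Lemma map_nbrs (T : Type) (F : nat -> T) (x : 'I_n) :
  [seq F z | z <- nbrs x] = [seq F (nat_of_ord z) | z <- enum 'I_n & e x z].
Proof. by rewrite /nbrs -val_enum_ord filter_map -map_comp. Qed.

Definition adj_mul (M : seq (seq N)) : seq (seq N) :=
  [seq foldr addrow [::] [seq nth [::] M z | z <- nbrs x] | x <- iota 0 n].

Definition id_mat : seq (seq N) :=
  [seq [seq (if x == y then 1%num else N0) | y <- iota 0 n] | x <- iota 0 n].

Lemma walksE k (x y : 'I_n) :
  walks e k x y = nth N0 (nth [::] (iter k adj_mul id_mat) x) y.
Proof.
elim: k x y => [|k IHk] x y /=.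
  by rewrite !nth_map_iota (inj_eq (@ord_inj n) x y); case: eqP.
rewrite nth_map_iota nth_sum_rows nat_of_sumN -!map_comp map_nbrs.
by rewrite sumn_map_filter big_enum_cond; apply: eq_bigr => z _; rewrite IHk.
Qed.

(* traject shares the powers of the adjacency matrix among all walk lengths. *)
Definition walk_table : seq (seq (seq N)) :=
  let Ms := traject adj_mul id_mat n in
  [seq [seq [seq nth N0 (nth [::] M x) y | M <- Ms] | y <- iota 0 n] | x <- iota 0 n].

Definition table_at (T : seq (seq (seq N))) (x y : nat) : seq N :=
  nth [::] (nth [::] T x) y.

Lemma wvecE (x y : 'I_n) : wvec e x y = map nat_of_bin (table_at walk_table x y).
Proof.
rewrite /table_at /walk_table !nth_map_iota traject_iota /wvec -!map_comp.
by apply: eq_map => k /=; rewrite walksE.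
Qed.

End WalkTable.

Fixpoint lexN (s t : seq N) : bool :=
  match s, t with
  | [::], _ => true
  | _ :: _, [::] => false
  | a :: s', b :: t' => if a == b then lexN s' t' else N.ltb a b
  end.

Definition walk_label_le (p q : seq N * nat) : bool :=
  (p.2 < q.2) || ((p.2 == q.2) && lexN p.1 q.1).

Section Certificate.
Variables (n : nat) (adj1 adj2 : seq (seq nat)).
Local Notation e1 := (@graph_of n adj1).
Local Notation e2 := (@graph_of n adj2).

(* The let-bindings make vm_compute build each walk table only once. *)
Definition check_omega0 (l1 l2 : seq nat) : bool :=
  let T1 := walk_table n adj1 in let T2 := walk_table n adj2 in
  all_pairs n (fun x y =>
    (nth 0 l1 x == nth 0 l2 y) ==> (table_at T1 x x == table_at T2 y y)).

Lemma check_omega0P (l1 l2 : seq nat) : check_omega0 l1 l2 ->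
  refines_omega e1 e2 0 (fun x => nth 0 l1 x) (fun y => nth 0 l2 y).
Proof.
rewrite /check_omega0 /= => /all_pairsP ok x y lxy /=.
by have := ok x y; rewrite lxy eqxx /= !wvecE => /eqP->.
Qed.

Definition walk_labels (T : seq (seq (seq N))) (l : seq nat) (x : nat) :=
  [seq (table_at T x u, nth 0 l u) | u <- iota 0 n].

(* Sorting only makes the multisets cheap to compare: soundness rests on
   perm_sort alone, so no property of walk_label_le is needed. *)
Definition check_omegaS (l1 l2 m1 m2 : seq nat) : bool :=
  let T1 := walk_table n adj1 in let T2 := walk_table n adj2 in
  let S1 := [seq sort walk_label_le (walk_labels T1 l1 x) | x <- iota 0 n] in
  let S2 := [seq sort walk_label_le (walk_labels T2 l2 y) | y <- iota 0 n] in
  all_pairs n (fun x y => (nth 0 m1 x == nth 0 m2 y) ==>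
    (nth 0 l1 x == nth 0 l2 y) && (nth [::] S1 x == nth [::] S2 y)).

Lemma check_omegaSP r (l1 l2 m1 m2 : seq nat) :
  refines_omega e1 e2 r (fun x => nth 0 l1 x) (fun y => nth 0 l2 y) ->
  check_omegaS l1 l2 m1 m2 ->
  refines_omega e1 e2 r.+1 (fun x => nth 0 m1 x) (fun y => nth 0 m2 y).
Proof.
rewrite /check_omegaS /= => l_omega /all_pairsP ok.
apply: refines_omegaS l_omega _ => x y mxy.
have := ok x y; rewrite mxy eqxx /= !nth_map_iota => /andP[/eqP lxy /eqP sorted_eq].
split=> //; have : perm_eq (walk_labels (walk_table n adj1) l1 x)
                           (walk_labels (walk_table n adj2) l2 y).
  by rewrite -(perm_sort walk_label_le) sorted_eq perm_sort.
move=> /(perm_map (fun p => (map nat_of_bin p.1, p.2))).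
rewrite /walk_labels -!val_enum_ord -!map_comp.
by congr perm_eq; apply: eq_map => u /=; rewrite wvecE.
Qed.

Lemma refines_omega_graph_seq r (l1 l2 : seq nat) :
  refines_omega e1 e2 r (fun x => nth 0 l1 x) (fun y => nth 0 l2 y) ->
  perm_eq [seq nth 0 l1 x | x <- iota 0 n] [seq nth 0 l2 x | x <- iota 0 n] ->
  omega_graph e1 r = omega_graph e2 r.
Proof.
move=> l_omega pl; apply: refines_omega_graph l_omega _.
by rewrite (map_comp (nth 0 l1) val) (map_comp (nth 0 l2) val) val_enum_ord.
Qed.

End Certificate.

Definition hash_mix (a b : N) : N :=
  N.modulo (31337 * a + 101 * b + 17)%num 1000000007%num.

Definition hash_leaf (a : N) : N := N.modulo (a * a * a + 7)%num 1000000007%num.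

Fixpoint color_hash r : color_type r -> N :=
  match r return color_type r -> N with
  | 0 => fun _ => 1%num
  | r'.+1 => fun c => hash_mix (color_hash c.1)
                        (sumN [seq hash_leaf (color_hash m) | m <- enum_mset c.2])
  end.

Section ColorHash.
Variables (n : nat) (adj : seq (seq nat)).
Local Notation e := (@graph_of n adj).

Definition hash_step (h : seq N) : seq N :=
  [seq hash_mix (nth N0 h x) (sumN [seq hash_leaf (nth N0 h y) | y <- nbrs n adj x])
  | x <- iota 0 n].

Definition color_hashes r : seq N := iter r hash_step (nseq n 1%num).

Lemma color_hashE r (x : 'I_n) : color_hash (color e r x) = nth N0 (color_hashes r) x.
Proof.
elim: r x => [|r IHr] x /=; first by rewrite nth_nseq ltn_ord.
rewrite /hash_step (nth_map_iota _ (fun x => hash_mix _ _)) IHr; congr hash_mix.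
rewrite (perm_sumN (perm_map _ (perm_eq_seq_mset _))) map_nbrs -map_comp.
by congr sumN; apply: eq_map => y /=; rewrite IHr.
Qed.

Lemma size_color_hashes r : size (color_hashes r) = n.
Proof. by elim: r => [|r IHr] /=; rewrite ?size_nseq // size_map size_iota. Qed.

Lemma WL1_hash :
  sumN [seq color_hash c | c <- enum_mset (WL1 e)] = sumN (color_hashes n).
Proof.
rewrite (perm_sumN (perm_map _ (perm_eq_seq_mset _))) -map_comp.
rewrite -[in RHS](mkseq_nth N0 (color_hashes n)) size_color_hashes /mkseq.
rewrite -val_enum_ord -map_comp.
by congr sumN; apply: eq_map => x /=; rewrite color_hashE.
Qed.

End ColorHash.

Lemma WL1_neq_hash n (adj1 adj2 : seq (seq nat)) :
  sumN (color_hashes n adj1 n) != sumN (color_hashes n adj2 n) ->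
  WL1 (@graph_of n adj1) <> WL1 (@graph_of n adj2).
Proof. by rewrite -!WL1_hash => + eq_WL1; rewrite eq_WL1 eqxx. Qed.

Lemma graph_of_sym_irr n (adj : seq (seq nat)) :
  all_pairs n (fun x y => (y \in nth [::] adj x) == (x \in nth [::] adj y)) ->
  all (fun x => x \notin nth [::] adj x) (iota 0 n) ->
  symmetric (@graph_of n adj) /\ irreflexive (@graph_of n adj).
Proof.
move=> /all_pairsP sym /allP irr; split=> [x y|x]; first exact/eqP/sym.
by apply/negbTE/irr; rewrite mem_iota ltn_ord.
Qed.

Definition adjG : seq (seq nat) := [::
  [:: 4; 7; 32; 40]; [:: 5; 6; 40]; [:: 5; 6; 32]; [:: 4; 7];
  [:: 0; 3; 8; 11; 33]; [:: 1; 2; 9; 10; 33]; [:: 1; 2; 8; 11]; [:: 0; 3; 9; 10];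
  [:: 4; 6; 12; 15; 34]; [:: 5; 7; 13; 14; 34]; [:: 5; 7; 12; 15]; [:: 4; 6; 13; 14];
  [:: 8; 10; 16; 19; 35]; [:: 9; 11; 17; 18; 35]; [:: 9; 11; 16; 19]; [:: 8; 10; 17; 18];
  [:: 12; 14; 20; 23; 36]; [:: 13; 15; 21; 22; 36]; [:: 13; 15; 20; 23]; [:: 12; 14; 21; 22];
  [:: 16; 18; 24; 27; 37]; [:: 17; 19; 25; 26; 37]; [:: 17; 19; 24; 27]; [:: 16; 18; 25; 26];
  [:: 20; 22; 28; 31; 38]; [:: 21; 23; 29; 30; 38]; [:: 21; 23; 28; 31]; [:: 20; 22; 29; 30];
  [:: 24; 26; 39; 41]; [:: 25; 27; 41]; [:: 25; 27; 39]; [:: 24; 26];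
  [:: 0; 2]; [:: 4; 5]; [:: 8; 9]; [:: 12; 13];
  [:: 16; 17]; [:: 20; 21]; [:: 24; 25]; [:: 28; 30];
  [:: 0; 1]; [:: 28; 29]].
Definition adjH : seq (seq nat) := [::
  [:: 4; 7; 32; 40]; [:: 5; 6; 40]; [:: 5; 6; 32]; [:: 4; 7];
  [:: 0; 3; 8; 11; 33]; [:: 1; 2; 9; 10; 33]; [:: 1; 2; 8; 11]; [:: 0; 3; 9; 10];
  [:: 4; 6; 12; 15; 34]; [:: 5; 7; 13; 14; 34]; [:: 5; 7; 12; 15]; [:: 4; 6; 13; 14];
  [:: 8; 10; 16; 19; 35]; [:: 9; 11; 17; 18; 35]; [:: 9; 11; 16; 19]; [:: 8; 10; 17; 18];
  [:: 12; 14; 20; 23; 36]; [:: 13; 15; 21; 22; 36]; [:: 13; 15; 20; 23]; [:: 12; 14; 21; 22];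
  [:: 16; 18; 24; 27; 37]; [:: 17; 19; 25; 26; 37]; [:: 17; 19; 24; 27]; [:: 16; 18; 25; 26];
  [:: 20; 22; 28; 31; 38]; [:: 21; 23; 29; 30; 38]; [:: 21; 23; 28; 31]; [:: 20; 22; 29; 30];
  [:: 24; 26; 39]; [:: 25; 27]; [:: 25; 27; 39; 41]; [:: 24; 26; 41];
  [:: 0; 2]; [:: 4; 5]; [:: 8; 9]; [:: 12; 13];
  [:: 16; 17]; [:: 20; 21]; [:: 24; 25]; [:: 28; 30];
  [:: 0; 1]; [:: 30; 31]].

Definition G : rel 'I_42 := graph_of adjG.
Definition H : rel 'I_42 := graph_of adjH.

(* Labellings refining omega_0, ..., omega_3: the classes of equal omega_r
   on G and H, found by computation. *)
Definition labG0 : seq nat := [::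
  0; 1; 1; 2; 3; 3; 4; 4; 5; 5; 6; 6; 7; 7; 8; 8; 7; 7; 8; 8; 5;
  5; 6; 6; 3; 3; 4; 4; 0; 1; 1; 2; 9; 10; 11; 12; 12; 11; 10; 9; 9; 9].
Definition labH0 : seq nat := [::
  0; 1; 1; 2; 3; 3; 4; 4; 5; 5; 6; 6; 7; 7; 8; 8; 7; 7; 8; 8; 5;
  5; 6; 6; 3; 3; 4; 4; 1; 2; 0; 1; 9; 10; 11; 12; 12; 11; 10; 9; 9; 9].
Definition labG1 : seq nat := [::
  0; 1; 1; 2; 3; 4; 5; 6; 7; 7; 8; 8; 9; 9; 10; 10; 9; 9; 10; 10; 7;
  7; 8; 8; 3; 4; 6; 5; 0; 1; 1; 2; 11; 12; 13; 14; 14; 13; 12; 11; 11; 11].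
Definition labH1 : seq nat := [::
  0; 1; 1; 2; 3; 4; 5; 6; 7; 7; 8; 8; 9; 9; 10; 10; 9; 9; 10; 10; 7;
  7; 8; 8; 4; 3; 5; 6; 1; 2; 0; 1; 11; 12; 13; 14; 14; 13; 12; 11; 11; 11].
Definition labG2 : seq nat := [::
  0; 1; 1; 2; 3; 4; 5; 6; 7; 8; 9; 10; 11; 11; 12; 12; 11; 11; 12; 12; 7;
  8; 10; 9; 3; 4; 6; 5; 0; 1; 1; 2; 13; 14; 15; 16; 16; 15; 14; 13; 13; 13].
Definition labH2 : seq nat := [::
  0; 1; 1; 2; 3; 4; 5; 6; 7; 8; 9; 10; 11; 11; 12; 12; 11; 11; 12; 12; 8;
  7; 9; 10; 4; 3; 5; 6; 1; 2; 0; 1; 13; 14; 15; 16; 16; 15; 14; 13; 13; 13].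
Definition labG3 : seq nat := [::
  0; 1; 1; 2; 3; 4; 5; 6; 7; 8; 9; 10; 11; 12; 13; 14; 11; 12; 14; 13; 7;
  8; 10; 9; 3; 4; 6; 5; 0; 1; 1; 2; 15; 16; 17; 18; 18; 17; 16; 15; 15; 15].
Definition labH3 : seq nat := [::
  0; 1; 1; 2; 3; 4; 5; 6; 7; 8; 9; 10; 11; 12; 13; 14; 12; 11; 13; 14; 8;
  7; 9; 10; 4; 3; 5; 6; 1; 2; 0; 1; 15; 16; 17; 18; 18; 17; 16; 15; 15; 15].

Lemma omega3_GH : omega_graph G 3 = omega_graph H 3.
Proof.
apply: (@refines_omega_graph_seq _ _ _ _ labG3 labH3); last by vm_compute.
apply: (@check_omegaSP _ _ _ _ labG2 labH2); last by vm_compute.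
apply: (@check_omegaSP _ _ _ _ labG1 labH1); last by vm_compute.
apply: (@check_omegaSP _ _ _ _ labG0 labH0); last by vm_compute.
by apply: check_omega0P; vm_compute.
Qed.

Lemma WL1_GH : WL1 G <> WL1 H.
Proof. by apply: WL1_neq_hash; vm_compute. Qed.

Theorem theorem6p7 :
  exists (N : nat) (G H : rel 'I_N),
    (symmetric G /\ irreflexive G) /\ (symmetric H /\ irreflexive H) /\
    omega_graph G 3 = omega_graph H 3 /\ WL1 G <> WL1 H.
Proof.
exists 42, G, H; split; first by apply: graph_of_sym_irr; vm_compute.
split; first by apply: graph_of_sym_irr; vm_compute.
split; [exact: omega3_GH | exact: WL1_GH].
Qed.
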